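(* Let $d\ge2$ and let $\mathbf{x}=(x_0,\dots,x_{d-1})\in\mathbb{R}^d$ with $x_i\ge 0$ for all $i$ and $\mathbf{x}\neq 0$. Define the operator on $\mathbb{C}^d\otimes\mathbb{C}^d$ $$I_{\mathbf{x}}=\frac{1}{\|\mathbf{x}\|_1^2}\left(\sum_{i=0}^{d-1}x_i^2\ket{ii}\bra{ii}+\sum_{0\le i<j<d}2x_ix_j\ket{D_{ij}}\bra{D_{ij}}\right),$$ where $\ket{D_{ij}}=(\ket{ij}+\ket{ji})/\sqrt2$ and $\|\mathbf{x}\|_1=\sum_i x_i$. Then $I_{\mathbf{x}}$ is a separable quantum state.
   Context: $\{\ket{0},\dots,\ket{d-1}\}$ denotes the computational basis of $\mathbb{C}^d$. A state is separable if it is a convex combination (possibly given by an integral over a probability measure) of product states $\rho^A\otimes\rho^B$. *)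

From HB Require Import structures.
From mathcomp Require Import all_boot all_order all_algebra.
From mathcomp Require Import reals.
From mathcomp Require Import complex mxtens.
Set Implicit Arguments. Unset Strict Implicit. Unset Printing Implicit Defensive.
Import Order.TTheory GRing.Theory Num.Theory.
Local Open Scope ring_scope.

Definition adjmx (C : numClosedFieldType) m n (A : 'M[C]_(m, n)) : 'M[C]_(n, m) :=
  (map_mx Num.conj A)^T.

Definition psd (C : numClosedFieldType) n (A : 'M[C]_n) : Prop :=
  adjmx A = A /\ forall v : 'cV[C]_n, 0 <= (adjmx v *m A *m v) 0 0.

Definition density (C : numClosedFieldType) n (A : 'M[C]_n) : Prop :=
  psd A /\ \tr A = 1.

Definition separable (C : numClosedFieldType) m n (rho : 'M[C]_(m * n)) : Prop :=
  density rho /\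
  exists (k : nat) (p : 'I_k -> C) (rA : 'I_k -> 'M[C]_m) (rB : 'I_k -> 'M[C]_n),
    [/\ forall l, 0 <= p l, \sum_l p l = 1,
        forall l, density (rA l) /\ density (rB l)
      & rho = \sum_l p l *: (rA l *t rB l)].

Definition ket (C : numClosedFieldType) d (i : 'I_d) : 'cV[C]_d := delta_mx i 0.
Definition ket2 (C : numClosedFieldType) d (i j : 'I_d) : 'cV[C]_(d * d) :=
  castmx (erefl, muln1 1) (ket C i *t ket C j).

Definition Dket (C : numClosedFieldType) d (i j : 'I_d) : 'cV[C]_(d * d) :=
  (sqrtC 2)^-1 *: (ket2 C i j + ket2 C j i).

Definition ketbra (C : numClosedFieldType) n (v : 'cV[C]_n) : 'M[C]_n := v *m adjmx v.

Definition norm1 (R : realType) d (x : 'I_d -> R) : R := \sum_i x i.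

Definition Iop (R : realType) d (x : 'I_d -> R) : 'M[R[i]]_(d * d) :=
  ((norm1 x) ^+ 2)^-1%:C%C *:
    (\sum_(i < d) ((x i) ^+ 2)%:C%C *: ketbra (ket2 _ i i)
     + \sum_(i < d) \sum_(j < d | (i < j)%N) (2 * x i * x j)%:C%C *: ketbra (Dket _ i j)).

From HB Require Import structures.
From mathcomp Require Import all_boot all_order all_algebra.
From mathcomp Require Import reals.
From mathcomp Require Import complex mxtens.
From mathcomp Require Import ring.
Set Implicit Arguments. Unset Strict Implicit. Unset Printing Implicit Defensive.
Import Order.TTheory GRing.Theory Num.Theory.
Local Open Scope ring_scope.

(* I_x is a uniform mixture of pure product states. For t : 'I_d -> Z/4 let
   psi_t = sum_k sqrt (x_k / |x|_1) i^(t_k) |k>. The entry <ab| psi_t psi_t^* (x)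
   psi_t psi_t^* |ce> carries the phase i^(t_a + t_b - t_c - t_e). Averaged over
   all t it vanishes unless {a, b} = {c, e} as multisets: otherwise shifting t by
   one at a point whose multiplicities in [a; b] and [c; e] differ multiplies the
   phase by a fourth root of unity other than 1. The surviving entries are
   x_a x_b / |x|_1^2, exactly those of I_x. *)

Section PositiveSemidefinite.
Variable C : numClosedFieldType.

Lemma adjmxK m n (A : 'M[C]_(m, n)) : adjmx (adjmx A) = A.
Proof. by apply/matrixP => i j; rewrite !mxE conjCK. Qed.

Lemma adjmxM m n p (A : 'M[C]_(m, n)) (B : 'M[C]_(n, p)) :
  adjmx (A *m B) = adjmx B *m adjmx A.
Proof. by rewrite /adjmx map_mxM trmx_mul. Qed.

Lemma adjmxD m n (A B : 'M[C]_(m, n)) : adjmx (A + B) = adjmx A + adjmx B.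
Proof. by apply/matrixP => i j; rewrite !mxE rmorphD. Qed.

Lemma adjmxZ m n c (A : 'M[C]_(m, n)) : adjmx (c *: A) = c^* *: adjmx A.
Proof. by apply/matrixP => i j; rewrite !mxE rmorphM. Qed.

Lemma adjmx_tens m n p q (A : 'M[C]_(m, n)) (B : 'M[C]_(p, q)) :
  adjmx (A *t B) = adjmx A *t adjmx B.
Proof. by rewrite /adjmx map_mxT trmx_tens. Qed.

Lemma ketbraE n (v : 'cV[C]_n) i j : ketbra v i j = v i 0 * (v j 0)^*.
Proof. by rewrite /ketbra mxE big_ord1 !mxE. Qed.

Lemma ketbra_tens m n (u : 'cV[C]_m) (v : 'cV[C]_n) :
  ketbra u *t ketbra v = ketbra (u *t v).
Proof. by rewrite /ketbra -tensmx_mul -adjmx_tens. Qed.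

Lemma psd_ketbra n (v : 'cV[C]_n) : psd (ketbra v).
Proof.
split=> [|w]; first by rewrite /ketbra adjmxM adjmxK.
have -> : adjmx w *m ketbra v *m w = adjmx (adjmx v *m w) *m (adjmx v *m w).
  by rewrite adjmxM adjmxK !mulmxA.
rewrite mxE.
by apply: sumr_ge0 => k _; rewrite !mxE mulrC mul_conjC_ge0.
Qed.

Lemma psd0 n : psd (0 : 'M[C]_n).
Proof.
split=> [|v]; first by apply/matrixP => i j; rewrite !mxE rmorph0.
by rewrite mulmx0 mul0mx mxE.
Qed.

Lemma psdD n (A B : 'M[C]_n) : psd A -> psd B -> psd (A + B).
Proof.
move=> [hA qA] [hB qB]; split=> [|v]; first by rewrite adjmxD hA hB.
by rewrite mulmxDr mulmxDl mxE addr_ge0.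
Qed.

Lemma psdZ n c (A : 'M[C]_n) : 0 <= c -> psd A -> psd (c *: A).
Proof.
move=> c_ge0 [hA qA]; split=> [|v]; first by rewrite adjmxZ hA geC0_conj.
by rewrite -scalemxAr -scalemxAl mxE mulr_ge0.
Qed.

Lemma psd_sum n (I : finType) (F : I -> 'M[C]_n) :
  (forall i, psd (F i)) -> psd (\sum_i F i).
Proof. by move=> psdF; apply: big_ind => //; [exact: psd0 | exact: psdD]. Qed.

Lemma mxtrace_tens m n (A : 'M[C]_m) (B : 'M[C]_n) : \tr (A *t B) = \tr A * \tr B.
Proof. by rewrite /mxtrace mulr_sum; apply: eq_bigr => i _; rewrite mxE. Qed.

Lemma separable_pure_mixture m n (T : finType) (p : T -> C)
    (u : T -> 'cV[C]_m) (v : T -> 'cV[C]_n) :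
  (forall t, 0 <= p t) -> \sum_t p t = 1 ->
  (forall t, \tr (ketbra (u t)) = 1) -> (forall t, \tr (ketbra (v t)) = 1) ->
  separable (\sum_t p t *: (ketbra (u t) *t ketbra (v t))).
Proof.
move=> p_ge0 p_sum1 tr_u tr_v; split.
  split; first by apply: psd_sum => t; rewrite ketbra_tens; apply/psdZ/psd_ketbra.
  rewrite linear_sum -[RHS]p_sum1; apply: eq_bigr => t _.
  by rewrite linearZ /= mxtrace_tens tr_u tr_v !mulr1.
exists #|T|, (p \o enum_val), (fun l => ketbra (u (enum_val l))),
  (fun l => ketbra (v (enum_val l))).
split=> //=.
- by rewrite -p_sum1 (big_enum_val p).
- by move=> l; split; split=> //; apply: psd_ketbra.
- by rewrite (big_enum_val (fun t => p t *: (ketbra (u t) *t ketbra (v t)))).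
Qed.

End PositiveSemidefinite.

Lemma sum_twist_eq0 (F : fieldType) (T : finType) (f : T -> F) (h : T -> T) (z : F) :
  injective h -> z != 1 -> (forall t, f (h t) = f t * z) -> \sum_t f t = 0.
Proof.
move=> h_inj z1 fh; have : (\sum_t f t) * (1 - z) = 0.
  rewrite mulrBr mulr1 mulr_suml [in X in X - _](reindex_inj h_inj) /=.
  by apply/eqP; rewrite subr_eq0; apply/eqP/eq_bigr => t _; apply: fh.
by move/eqP; rewrite mulf_eq0 subr_eq0 [1 == _]eq_sym (negbTE z1) orbF => /eqP.
Qed.

Section Phases.
Variable C : numClosedFieldType.

Lemma prim4_rootCi : 4.-primitive_root ('i : C).
Proof.
have i2 : 'i ^+ 2 = -1 :> C by exact: sqrCi.
have i_real (c : C) : c \is Num.real -> 'i != c.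
  by move=> cR; apply: contraNneq (@nonRealCi C) => ->.
have N11 : -1 != 1 :> C by rewrite eq_sym -addr_eq0 -(natrD _ 1 1) pnatr_eq0.
apply/andP; split => //; apply/forallP => -[[|[|[|[|j]]]] //= _].
all: rewrite unity_rootE /= ?eqbF_neg ?eqb_id.
- by rewrite expr1 i_real ?real1.
- by rewrite i2.
- by rewrite exprS i2 mulrN1 eqr_oppLR i_real ?realN ?real1.
- by rewrite (exprM _ 2 2) i2 sqrrN expr1n.
Qed.

Definition phase (n : 'I_4) : C := 'i ^+ n.

Lemma phaseD1 n : phase (n + 1) = phase n * 'i.
Proof. by rewrite /phase /= !(prim_expr_mod prim4_rootCi) addn1 exprSr. Qed.

Lemma expCi_mulJ n : 'i ^+ n * ('i ^+ n)^* = 1 :> C.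
Proof. by rewrite rmorphXn /= conjCi -exprMn mulrN mulCii opprK expr1n. Qed.

Lemma sum_phase_prod (I : finType) (s1 s2 : seq I) :
  (size s1 < 4)%N -> (size s2 < 4)%N ->
  \sum_(t : {ffun I -> 'I_4})
     \prod_(k <- s1) phase (t k) * (\prod_(k <- s2) phase (t k))^*
    = (perm_eq s1 s2)%:R * #|{ffun I -> 'I_4}|%:R.
Proof.
move=> s1_small s2_small.
have [s12 | /allPn [k _ /= count_neq]] := boolP (perm_eq s1 s2).
  rewrite mul1r -sumr_const; apply: eq_bigr => t _.
  rewrite (perm_big _ s12) rmorph_prod -big_split big1 //= => m _.
  exact: expCi_mulJ.
rewrite mul0r.
pose sh (t : {ffun I -> 'I_4}) : {ffun I -> 'I_4} :=
  [ffun m => if m == k then t m + 1 else t m].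
have sh_inj : injective sh.
  move=> t1 t2 /ffunP eq_sh; apply/ffunP => m; move: (eq_sh m); rewrite !ffunE.
  by case: ifP => // _; apply: addIr.
have prod_sh t s : \prod_(m <- s) phase (sh t m)
    = \prod_(m <- s) phase (t m) * 'i ^+ count_mem k s.
  rewrite -[count_mem k s]sum1_count -prodrXr.
  rewrite [\prod_(i <- s | i == k) _]big_mkcond -big_split /=.
  by apply: eq_bigr => m _; rewrite ffunE; case: ifP; rewrite ?phaseD1 ?mulr1.
pose c s := count_mem k s.
apply: (sum_twist_eq0 sh_inj (z := 'i ^+ c s1 * ('i ^+ c s2)^*)) => [|t].
- apply: contra count_neq => /eqP z1.
  have : 'i ^+ c s1 == 'i ^+ c s2 :> C.
    by rewrite -[X in X == _]mulr1 -(expCi_mulJ (c s2)) mulrCA z1 mulr1.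
  rewrite (eq_prim_root_expr prim4_rootCi) !modn_small //.
  + exact: leq_ltn_trans (count_size _ _) s2_small.
  + exact: leq_ltn_trans (count_size _ _) s1_small.
- by rewrite !prod_sh rmorphM /= mulrACA.
Qed.

End Phases.

Lemma perm_eq_pair (T : eqType) (a b c e : T) :
  perm_eq [:: a; b] [:: c; e] = ((a, b) == (c, e)) || ((a, b) == (e, c)).
Proof.
have swap (x y : T) : perm_eq [:: x; y] [:: y; x] by rewrite (perm_catC [:: x]).
apply/idP/idP => [ab_ce | /orP[] /eqP[-> ->]]; [|exact: perm_refl|exact: swap].
have ce_swap := perm_trans ab_ce (swap c e).
have : a \in [:: c; e] by rewrite -(perm_mem ab_ce) mem_head.
rewrite !inE xpair_eqE => /orP[] /eqP a_eq; subst a.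
- by move: ab_ce; rewrite perm_cons => /perm_mem/(_ b); rewrite !inE !eqxx => /esym ->.
- move: ce_swap; rewrite perm_cons => /perm_mem/(_ b).
  by rewrite !inE eqxx => /esym/eqP ->; rewrite eqxx orbT.
Qed.

Lemma sum_pair_indicator (R : pzSemiRingType) (I : finType) (P : rel I)
    (K : I -> I -> R) (a b : I) :
  \sum_i \sum_(j | P i j) ((a, b) == (i, j))%:R * K i j = (P a b)%:R * K a b.
Proof.
rewrite pair_big_dep big_mkcond (bigD1 (a, b)) //= big1 ?addr0 => [|[i j] /negbTE ne].
  by rewrite eqxx; case: (P a b); rewrite ?mul1r ?mul0r.
by rewrite /= [(a, b) == _]eq_sym ne mul0r if_same.
Qed.

Section SymmetricState.
Variable C : numClosedFieldType.

Definition IopC d (y : 'I_d -> C) : 'M[C]_(d * d) :=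
  ((\sum_i y i) ^+ 2)^-1 *:
    (\sum_(i < d) (y i ^+ 2) *: ketbra (ket2 C i i)
     + \sum_(i < d) \sum_(j < d | (i < j)%N) (2 * y i * y j) *: ketbra (Dket C i j)).

Lemma ket2E d (i j a b : 'I_d) :
  ket2 C i j (mxtens_index (a, b)) 0 = ((a, b) == (i, j))%:R.
Proof.
rewrite /ket2 castmxE /=.
rewrite (_ : cast_ord _ _ = mxtens_index (a, b)); last exact: val_inj.
rewrite (_ : cast_ord _ _ = mxtens_index (0 : 'I_1, 0 : 'I_1)); last exact: val_inj.
by rewrite tensmxE /ket !mxE !eqxx xpair_eqE -natrM mulnb !andbT.
Qed.

Lemma ketbra_ket2E d (i j a b c e : 'I_d) :
  ketbra (ket2 C i j) (mxtens_index (a, b)) (mxtens_index (c, e))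
  = ((a, b) == (i, j))%:R * ((c, e) == (i, j))%:R.
Proof. by rewrite ketbraE !ket2E rmorph_nat. Qed.

Lemma ketbra_DketE d (i j a b c e : 'I_d) :
  ketbra (Dket C i j) (mxtens_index (a, b)) (mxtens_index (c, e))
  = 2^-1 * ((((a, b) == (i, j))%:R + ((a, b) == (j, i))%:R)
            * (((c, e) == (i, j))%:R + ((c, e) == (j, i))%:R)).
Proof.
have s_ge0 : 0 <= (sqrtC 2 : C)^-1 by rewrite invr_ge0 sqrtC_ge0 ler0n.
have ss : (sqrtC 2 : C)^-1 * (sqrtC 2)^-1 = 2^-1.
  by rewrite -invrM ?unitfE ?sqrtC_eq0 ?pnatr_eq0 // -expr2 sqrtCK.
rewrite ketbraE /Dket !mxE !ket2E rmorphM rmorphD /= geC0_conj // !rmorph_nat -ss.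
by rewrite mulrACA.
Qed.

Lemma IopC_entry d (y : 'I_d -> C) (a b c e : 'I_d) :
  IopC y (mxtens_index (a, b)) (mxtens_index (c, e))
  = y a * y b / (\sum_i y i) ^+ 2 * (perm_eq [:: a; b] [:: c; e])%:R.
Proof.
set ab := mxtens_index (a, b); set ce := mxtens_index (c, e).
pose K i j := y i * y j * (((c, e) == (i, j))%:R + ((c, e) == (j, i))%:R).
have diag : (\sum_i y i ^+ 2 *: ketbra (ket2 C i i)) ab ce
    = (a == b)%:R * (y a * y b * ((c, e) == (a, b))%:R).
  rewrite summxE; under eq_bigr do rewrite mxE ketbra_ket2E.
  rewrite (bigD1 a) //= big1 ?addr0 => [|i /negbTE ai]; last first.
    by rewrite xpair_eqE [a == i]eq_sym ai mul0r mulr0.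
  rewrite xpair_eqE eqxx.
  by case: (eqVneq a b) => [<-|_]; rewrite /= ?mul1r ?mul0r ?mulr0 // expr2.
have entry i j : ((2 * y i * y j) *: ketbra (Dket C i j)) ab ce
    = (((a, b) == (i, j))%:R + ((b, a) == (i, j))%:R) * K i j.
  rewrite mxE ketbra_DketE /K [(b, a) == _]xpair_eqE [(a, b) == (j, i)]xpair_eqE.
  by rewrite andbC; field.
have off : (\sum_(i < d) \sum_(j < d | (i < j)%N)
               (2 * y i * y j) *: ketbra (Dket C i j)) ab ce
    = (a != b)%:R * K a b.
  rewrite summxE; under eq_bigr => i _ do rewrite summxE.
  rewrite (eq_bigr (fun i : 'I_d =>
      \sum_(j < d | (i < j)%N) ((a, b) == (i, j))%:R * K i j
    + \sum_(j < d | (i < j)%N) ((b, a) == (i, j))%:R * K i j)).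
    rewrite big_split !(sum_pair_indicator (fun i j : 'I_d => (i < j)%N)) /=.
    have -> : K b a = K a b by rewrite /K [y b * _]mulrC [in LHS]addrC.
    by rewrite -mulrDl -natrD -val_eqE neq_ltn; case: ltngtP.
  by move=> i _; rewrite -big_split; apply: eq_bigr => j _; rewrite entry mulrDl.
rewrite mxE [in X in _ * X]mxE diag off perm_eq_pair /K mulrC [RHS]mulrAC.
congr (_ * _); rewrite [(a, b) == (c, e)]eq_sym [(a, b) == (e, c)]xpair_eqE.
rewrite andbC -xpair_eqE [(b, a) == _]eq_sym.
case: (eqVneq a b) => [<-|ne]; first by rewrite orbb /= mul0r addr0 mul1r.
rewrite /= mul0r add0r mul1r; congr (_ * _).
case: (eqVneq (c, e) (a, b)) => [[-> ->]|_]; last by rewrite add0r.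
by rewrite xpair_eqE (negbTE ne) addr0.
Qed.

Definition psi d (y : 'I_d -> C) (t : {ffun 'I_d -> 'I_4}) : 'cV[C]_d :=
  \col_k (sqrtC (y k / \sum_i y i) * phase C (t k)).

Variables (d : nat) (y : 'I_d -> C).
Hypotheses (y_ge0 : forall i, 0 <= y i) (sum_y_neq0 : \sum_i y i != 0).

Let sq k := sqrtC (y k / \sum_i y i).

Let sq_ge0 k : 0 <= sq k.
Proof. by rewrite sqrtC_ge0 divr_ge0 ?sumr_ge0. Qed.

Let sqK k : sq k ^+ 2 = y k / \sum_i y i.
Proof. exact: sqrtCK. Qed.

Let card_neq0 : #|{ffun 'I_d -> 'I_4}|%:R != 0 :> C.
Proof. by rewrite pnatr_eq0 card_ffun !card_ord expn_eq0. Qed.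

Lemma tr_ketbra_psi t : \tr (ketbra (psi y t)) = 1.
Proof.
rewrite /mxtrace -(mulfV sum_y_neq0) mulr_suml; apply: eq_bigr => k _.
rewrite ketbraE !mxE rmorphM /= (geC0_conj (sq_ge0 k)) mulrACA expCi_mulJ.
by rewrite mulr1 -expr2 sqK.
Qed.

Lemma IopC_mixture :
  IopC y = \sum_t #|{ffun 'I_d -> 'I_4}|%:R^-1 *: (ketbra (psi y t) *t ketbra (psi y t)).
Proof.
apply/matrixP => r s; case: (mxtens_indexP r) => a b; case: (mxtens_indexP s) => c e.
set p := _^-1; rewrite IopC_entry summxE.
have entry t : (p *: (ketbra (psi y t) *t ketbra (psi y t)))
    (mxtens_index (a, b)) (mxtens_index (c, e))
  = p * (\prod_(k <- [:: a; b]) sq k * \prod_(k <- [:: c; e]) sq k)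
    * (\prod_(k <- [:: a; b]) phase C (t k) * (\prod_(k <- [:: c; e]) phase C (t k))^*).
  rewrite mxE tensmxE !ketbraE !mxE !big_cons !big_nil !rmorphM /=.
  by rewrite !(geC0_conj (sq_ge0 _)) /sq; ring.
rewrite (eq_bigr _ (fun t _ => entry t)) -mulr_sumr sum_phase_prod //.
have [abce|_] := boolP (perm_eq _ _); last by rewrite !mul0r !mulr0.
rewrite -(perm_big _ abce) !big_cons !big_nil /= !mulr1 [RHS]mulrAC /p mul1r.
rewrite mulVf // mul1r.
by rewrite mulrACA -!expr2 !sqK; field.
Qed.

Lemma IopC_separable : separable (IopC y).
Proof.
rewrite IopC_mixture; apply: separable_pure_mixture => [t||t|t]; rewrite ?tr_ketbra_psi //.
- by rewrite invr_ge0 ler0n.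
- by rewrite sumr_const -[_ *+ _]mulr_natr mulVf.
Qed.

End SymmetricState.

Lemma Iop_IopC (R : realType) d (x : 'I_d -> R) : Iop x = IopC (fun i => (x i)%:C%C).
Proof.
rewrite /Iop /IopC /norm1 fmorphV rmorphXn rmorph_sum; congr (_ *: (_ + _)).
  by apply: eq_bigr => i _; rewrite rmorphXn.
by apply: eq_bigr => i _; apply: eq_bigr => j _; rewrite !rmorphM rmorph_nat.
Qed.

Unset Implicit Arguments.

Theorem lemma2 (R : realType) (d : nat) (hd : (2 <= d)%N) (x : 'I_d -> R)
  (hx0 : forall i, 0 <= x i) (hx : exists i, x i != 0) :
  separable (Iop x).
Proof.
rewrite Iop_IopC; apply: IopC_separable => [i|]; first by rewrite ler0c.
rewrite -rmorph_sum fmorph_eq0; have [i xi_neq0] := hx.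
by apply: contra xi_neq0 => /eqP/psumr_eq0P ->.
Qed.
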